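(* Let $\mathbf{M}$ be symmetric, $\epsilon>0$, and $\mathbf{X}=[\bm{x}_1,\dots,\bm{x}_r]\in\mathrm{St}(N,r)$ with $\|\mathrm{grad}\,g(\mathbf{X})\|_F\le\epsilon$. Write $\mathbf{X}^\top\mathbf{M}\mathbf{X}=\mathbf{D}_{\mathbf{M}}+\mathbf{E}_{\mathbf{M}}$ with $\mathbf{D}_{\mathbf{M}}$ its diagonal part and $\mathbf{E}_{\mathbf{M}}$ its off-diagonal part. Then $\|\mathbf{E}_{\mathbf{M}}\|_F\le2\epsilon$, $\|\mathbf{X}\mathbf{X}^\top\mathbf{M}\mathbf{X}-\mathbf{M}\mathbf{X}\|_F\le\epsilon$, $\|\mathbf{X}\mathbf{D}_{\mathbf{M}}-\mathbf{M}\mathbf{X}\|_F\le3\epsilon$, and for each $j\in[r]$ there is an eigenvalue $\lambda_{i_j}$ of $\mathbf{M}$ with $|\bm{x}_j^\top\mathbf{M}\bm{x}_j-\lambda_{i_j}|\le3\epsilon$.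
   Context: $\mathrm{St}(N,r)=\{\mathbf{X}\in\mathbb{R}^{N\times r}:\mathbf{X}^\top\mathbf{X}=\mathbf{I}_r\}$, $\mathbf{N}=\mathrm{diag}(r,r-1,\dots,1)$, $g(\mathbf{X})=-\tfrac12\mathrm{tr}(\mathbf{X}^\top\mathbf{M}\mathbf{X}\mathbf{N})$ on $\mathrm{St}(N,r)$ with Riemannian gradient $\mathrm{grad}\,g(\mathbf{X})=(\mathbf{X}\mathbf{X}^\top-\mathbf{I}_N)\mathbf{M}\mathbf{X}\mathbf{N}-\tfrac12\mathbf{X}[\mathbf{X}^\top\mathbf{M}\mathbf{X},\mathbf{N}]$, $[\mathbf{A},\mathbf{B}]=\mathbf{A}\mathbf{B}-\mathbf{B}\mathbf{A}$. *)

From mathcomp Require Import all_boot all_order all_algebra.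
Set Implicit Arguments. Unset Strict Implicit. Unset Printing Implicit Defensive.
Import Order.TTheory GRing.Theory Num.Theory.
Local Open Scope ring_scope.

Definition stiefel (R : rcfType) (n r : nat) (X : 'M[R]_(n, r)) : Prop :=
  X^T *m X = 1%:M.

Definition Nmat (R : rcfType) (r : nat) : 'M[R]_r :=
  diag_mx (\row_(i < r) ((r - i)%N)%:R).

Definition commr (R : rcfType) (r : nat) (A B : 'M[R]_r) : 'M[R]_r :=
  A *m B - B *m A.

(* Riemannian gradient of g(X) = -1/2 tr(X^T M X N) on St(n, r) *)
Definition gradg (R : rcfType) (n r : nat) (M : 'M[R]_n) (X : 'M[R]_(n, r))
  : 'M[R]_(n, r) :=
  (X *m X^T - 1%:M) *m M *m X *m Nmat R r
  - 2^-1 *: (X *m commr (X^T *m M *m X) (Nmat R r)).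

Definition frob (R : rcfType) (m p : nat) (A : 'M[R]_(m, p)) : R :=
  Num.sqrt (\sum_(i < m) \sum_(j < p) A i j ^+ 2).

Definition diag_part (R : rcfType) (r : nat) (A : 'M[R]_r) : 'M[R]_r :=
  \matrix_(i, j) (if i == j then A i j else 0).
Definition offdiag_part (R : rcfType) (r : nat) (A : 'M[R]_r) : 'M[R]_r :=
  \matrix_(i, j) (if i == j then 0 else A i j).

From mathcomp Require Import all_boot all_order all_algebra.
From mathcomp.real_closed Require Import complex.
From mathcomp Require Import ring lra.
Set Implicit Arguments.
Unset Strict Implicit.
Unset Printing Implicit Defensive.
Import Order.TTheory GRing.Theory Num.Theory.
Local Open Scope ring_scope.
Local Open Scope sesquilinear_scope.

(* Write A = X^T M X, Q = (X X^T - I) M X and E for the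
   off-diagonal part of A.  Since Q is orthogonal to the columns of X, the
   gradient Q N - X [A, N]/2 splits orthogonally, and as the weights of N are
   >= 1 and pairwise at distance >= 1 we get the key estimate
       |Q|^2 + |E|^2 / 4 <= |grad g(X)|^2 <= eps^2,
   which gives the bounds on E and Q.  The residual X D - M X equals Q - X E,
   again an orthogonal sum, hence is at most 2 eps <= 3 eps.  Finally column j
   of this residual is the Ritz residual x_j^T M x_j x_j - M x_j, and a
   symmetric matrix always has an eigenvalue within the residual norm of a
   Rayleigh quotient; the latter follows from the spectral theorem applied to
   the complexification of M. *)

Section NormalSpectrum.
Variables (C : numClosedFieldType) (n : nat) (A : 'M[C]_n).
Hypothesis A_normal : A \is normalmx.

Let P := spectralmx A.
Let D := spectral_diag A.
Let A_spectral : A = P^t* *m diag_mx D *m P.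
Proof.
by rewrite -invmx_unitary ?spectral_unitarymx //; exact/orthomx_spectralP.
Qed.
Let P_unitary : P *m P^t* = 1%:M.
Proof. exact/unitarymxP/spectral_unitarymx. Qed.
Let Pt_unitary : P^t* *m P = 1%:M.
Proof.
by rewrite -invmx_unitary ?spectral_unitarymx // mulVmx ?spectral_unit.
Qed.

Lemma spectral_diag_eigenvalue i : eigenvalue A (D 0 i).
Proof.
apply/eigenvalueP; exists (delta_mx 0 i *m P).
  rewrite {1}A_spectral !mulmxA -(mulmxA _ P) P_unitary mulmx1.
  by rewrite -(rowE i (diag_mx D)) row_diag_mx scalemxAl.
apply/eqP => /(congr1 (mulmx^~ (P^t*))).
rewrite -mulmxA P_unitary mulmx1 mul0mx.
by move/matrixP/(_ 0 i); rewrite !mxE !eqxx /= => /eqP; rewrite oner_eq0.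
Qed.

(* Rayleigh-type bound: for a unit row vector U, the squared norm of U A is
   at least any common lower bound c of the squared moduli of the eigenvalues,
   since it is a convex combination of them. *)
Lemma normal_sqnorm_lower (U : 'rV[C]_n) (c : C) :
  (U *m U^t*) 0 0 = 1 -> (forall k, c <= D 0 k * (D 0 k)^*) ->
  c <= ((U *m A) *m (U *m A)^t*) 0 0.
Proof.
move=> U_unit c_le.
pose W := U *m P^t*.
have WW : W *m W^t* = U *m U^t*.
  by rewrite /W trmx_mul map_mxM trmxCK mulmxA -(mulmxA U) Pt_unitary mulmx1.
have UA : U *m A = W *m diag_mx D *m P by rewrite {1}A_spectral !mulmxA.
clearbody W.
have -> : ((U *m A) *m (U *m A)^t*) 0 0
          = \sum_k W 0 k * (W 0 k)^* * (D 0 k * (D 0 k)^*).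
  rewrite UA !trmx_mul !map_mxM tr_diag_mx map_diag_mx.
  rewrite !mulmxA -(mulmxA _ P) P_unitary mulmx1 !mul_mx_diag [LHS]mxE.
  by apply: eq_bigr => k _; rewrite !mxE; ring.
have W_unit : \sum_k W 0 k * (W 0 k)^* = 1.
  by rewrite -U_unit -WW [RHS]mxE; apply: eq_bigr => k _; rewrite !mxE.
rewrite -[c]mul1r -W_unit mulr_suml.
apply: ler_sum => k _.
by apply: ler_wpM2l; [exact: mul_conjC_ge0 | exact: c_le].
Qed.

End NormalSpectrum.

(* It is obtained by
   complexifying B, which is then hermitian with real spectrum. *)
Lemma sym_eigenvalue_sqnorm (R : rcfType) n (B : 'M[R]_n) (u : 'rV[R]_n) :
  B^T = B -> (u *m u^T) 0 0 = 1 ->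
  exists mu, eigenvalue B mu /\ mu ^+ 2 <= ((u *m B) *m (u *m B)^T) 0 0.
Proof.
move=> B_sym u_unit.
(* The dimension is positive, as u is a unit vector. *)
have [i1 _] : exists i : 'I_n, True.
  case: n B u u_unit {B_sym} => [|k] B u; last by exists ord0.
  by rewrite mxE big_ord0 => /esym/eqP; rewrite oner_eq0.
pose toC := real_complex R.
have conjR x : (toC x)^* = toC x.
  by rewrite conj_Creal //; apply/complex_realP; exists x.
have map_tr m p (K : 'M[R]_(m, p)) : (map_mx toC K)^t* = map_mx toC K^T.
  by apply/matrixP => i j; rewrite !mxE conjR.
pose A := map_mx toC B.
have A_herm : A \is hermsymmx.
  apply/is_hermitianmxP; rewrite expr0 scale1r.
  by rewrite map_tr B_sym.
pose dr k := complex.Re (spectral_diag A 0 k).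
have D_real k : spectral_diag A 0 k = toC (dr k).
  by apply/esym/RRe_real/(mxOverP (hermitian_spectral_diag_real A_herm)).
pose i0 := [arg min_(i < i1) (dr i ^+ 2)]%O.
have i0_min j : dr i0 ^+ 2 <= dr j ^+ 2.
  by rewrite /i0; case: arg_minP => // i _; apply.
exists (dr i0); split.
  rewrite -(eigenvalue_map toC).
  have := spectral_diag_eigenvalue (hermitian_normalmx A_herm) i0.
  by rewrite D_real.
rewrite -lecR -/toC.
have -> : toC (((u *m B) *m (u *m B)^T) 0 0)
          = ((map_mx toC u *m A) *m (map_mx toC u *m A)^t*) 0 0.
  by rewrite -map_mxM map_tr -map_mxM [RHS]mxE.
apply: normal_sqnorm_lower; first exact: hermitian_normalmx.
  by rewrite map_tr -map_mxM mxE u_unit rmorph1.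
by move=> k; rewrite D_real conjR -rmorphM lecR -expr2.
Qed.

Section SquaredFrobenius.
Variable R : rcfType.

Definition sqfrob m p (K : 'M[R]_(m, p)) : R := \sum_i \sum_j K i j ^+ 2.

Lemma sqfrob_ge0 m p (K : 'M[R]_(m, p)) : 0 <= sqfrob K.
Proof. by apply: sumr_ge0 => i _; apply: sumr_ge0 => j _; exact: sqr_ge0. Qed.

Lemma frob_le m p (K : 'M[R]_(m, p)) (c : R) :
  0 <= c -> (frob K <= c) = (sqfrob K <= c ^+ 2).
Proof.
by move=> c_ge0; rewrite -[in RHS]ler_sqrt ?sqr_ge0 // sqrtr_sqr ger0_norm.
Qed.

Lemma sqfrob_tr m p (K : 'M[R]_(m, p)) : sqfrob K = \tr (K^T *m K).
Proof.
rewrite /sqfrob /mxtrace exchange_big; apply: eq_bigr => j _; rewrite mxE.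
by apply: eq_bigr => i _; rewrite !mxE expr2.
Qed.

Lemma sqfrobB_orth m p (K L : 'M[R]_(m, p)) :
  K^T *m L = 0 -> sqfrob (K - L) = sqfrob K + sqfrob L.
Proof.
move=> KL0.
have LK0 : L^T *m K = 0 by rewrite -[L^T *m K]trmxK trmx_mul trmxK KL0 trmx0.
rewrite !sqfrob_tr [(K - L)^T]raddfB /= mulmxBl !mulmxBr KL0 LK0.
rewrite !raddfB /= mxtrace0.
by rewrite subr0 oppr0 sub0r opprK.
Qed.

Lemma sqfrobZ m p (a : R) (K : 'M[R]_(m, p)) :
  sqfrob (a *: K) = a ^+ 2 * sqfrob K.
Proof.
rewrite /sqfrob mulr_sumr; apply: eq_bigr => i _; rewrite mulr_sumr.
by apply: eq_bigr => j _; rewrite mxE exprMn.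
Qed.

Lemma sqfrob_isometry n m p (X : 'M[R]_(n, m)) (K : 'M[R]_(m, p)) :
  X^T *m X = 1%:M -> sqfrob (X *m K) = sqfrob K.
Proof.
by move=> XX; rewrite !sqfrob_tr trmx_mul mulmxA -(mulmxA K^T) XX mulmx1.
Qed.

Lemma sqfrob_le m p (K L : 'M[R]_(m, p)) :
  (forall i j, K i j ^+ 2 <= L i j ^+ 2) -> sqfrob K <= sqfrob L.
Proof. by move=> KL; apply: ler_sum => i _; apply: ler_sum => j _. Qed.

Lemma sqfrob_cV m (w : 'cV[R]_m) : sqfrob w = (w^T *m w) 0 0.
Proof. by rewrite sqfrob_tr trace_mx11. Qed.

Lemma frob_col_le m p (K : 'M[R]_(m, p)) j : frob (col j K) <= frob K.
Proof.
rewrite frob_le ?sqrtr_ge0 // sqr_sqrtr ?sqfrob_ge0 //.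
apply: ler_sum => i _; rewrite big_ord1 mxE (bigD1 j) //= lerDl.
by apply: sumr_ge0 => k _; exact: sqr_ge0.
Qed.

Lemma frobN m p (K : 'M[R]_(m, p)) : frob (- K) = frob K.
Proof.
congr Num.sqrt; apply: eq_bigr => i _.
by apply: eq_bigr => j _; rewrite mxE sqrrN.
Qed.

End SquaredFrobenius.

Lemma eigenvalue_shift (F : fieldType) n (B : 'M[F]_n) (d mu : F) :
  eigenvalue (B - d%:M) mu -> eigenvalue B (d + mu).
Proof.
move/eigenvalueP => [w w_eig w_neq0]; apply/eigenvalueP; exists w => //.
by rewrite -[B](subrK d%:M) mulmxDr w_eig mul_mx_scalar addrC scalerDl.
Qed.

Lemma sym_residual_eigenvalue (R : rcfType) n (M : 'M[R]_n) (v : 'cV[R]_n)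
    (d : R) :
  M^T = M -> (v^T *m v) 0 0 = 1 ->
  exists lam, eigenvalue M lam /\ `|d - lam| <= frob (M *m v - d *: v).
Proof.
move=> M_sym v_unit.
pose B := M - d%:M.
have B_sym : B^T = B by rewrite /B linearB /= M_sym tr_scalar_mx.
have [|mu [mu_eig mu_le]] := sym_eigenvalue_sqnorm B_sym (u := v^T).
  by rewrite trmxK.
exists (d + mu); split; first exact: eigenvalue_shift.
have residual : v^T *m B = (M *m v - d *: v)^T.
  by rewrite -{1}B_sym -trmx_mul /B mulmxBl mul_scalar_mx.
rewrite residual trmxK -sqfrob_cV in mu_le.
by rewrite opprD addNKr normrN -sqrtr_sqr ler_sqrt ?sqfrob_ge0.
Qed.

Section WeightMatrix.
Variables (R : rcfType) (r : nat).

Lemma mulmx_NmatE m (K : 'M[R]_(m, r)) i j :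
  (K *m Nmat R r) i j = K i j * (r - j)%:R.
Proof. by rewrite /Nmat mul_mx_diag !mxE. Qed.

(* All weights r - j of N are at least 1, so N only enlarges the norm. *)
Lemma sqfrob_le_mulNmat m (K : 'M[R]_(m, r)) :
  sqfrob K <= sqfrob (K *m Nmat R r).
Proof.
apply: sqfrob_le => i j; rewrite mulmx_NmatE exprMn ler_peMr ?sqr_ge0 //.
by rewrite exprn_ege1 // ler1n subn_gt0 ltn_ord.
Qed.

(* Entry (i, j) of [A, N] is A i j times the weight difference i - j, which is
   at least 1 in absolute value off the diagonal. *)
Lemma sqfrob_offdiag_le_commr (A : 'M[R]_r) :
  sqfrob (offdiag_part A) <= sqfrob (commr A (Nmat R r)).
Proof.
apply: sqfrob_le => i j; rewrite /offdiag_part mxE.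
case: eqVneq => [_|i_neq_j]; first by rewrite expr0n sqr_ge0.
have -> : commr A (Nmat R r) i j = A i j * (i%:R - j%:R).
  rewrite /commr /Nmat mul_mx_diag mul_diag_mx !mxE.
  rewrite !natrB ?(ltnW (ltn_ord _)) //; ring.
rewrite exprMn ler_peMr ?sqr_ge0 //.
have [lt_ij|lt_ji|eq_ij] := ltngtP i j.
- by rewrite -opprB sqrrN -natrB ?(ltnW lt_ij) // exprn_ege1 // ler1n subn_gt0.
- by rewrite -natrB ?(ltnW lt_ji) // exprn_ege1 // ler1n subn_gt0.
- by case/eqP: i_neq_j; apply: val_inj.
Qed.

End WeightMatrix.

Lemma diag_partE (R : rcfType) r (A : 'M[R]_r) :
  diag_part A = diag_mx (\row_i A i i).
Proof.
apply/matrixP => i j; rewrite !mxE.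
by case: eqVneq => [->|]; rewrite ?mulr1n ?mulr0n.
Qed.

Lemma diag_part_offdiag (R : rcfType) r (A : 'M[R]_r) :
  diag_part A = A - offdiag_part A.
Proof.
by apply/matrixP => i j; rewrite !mxE; case: eqVneq; rewrite ?subr0 ?subrr.
Qed.

Lemma col_form (R : rcfType) n r (Y : 'M[R]_(n, r)) (K : 'M[R]_n) j k :
  ((col j Y)^T *m K *m col k Y) 0 0 = (Y^T *m K *m Y) j k.
Proof.
rewrite !mxE; apply: eq_bigr => l _; rewrite !mxE; congr (_ * _).
by apply: eq_bigr => i _; rewrite !mxE.
Qed.

Section StiefelGradient.
Variables (R : rcfType) (n r : nat) (M : 'M[R]_n) (X : 'M[R]_(n, r)).
Hypothesis X_stiefel : stiefel X.

Let A := X^T *m M *m X.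
Let Q := (X *m X^T - 1%:M) *m M *m X.

(* Q is orthogonal to the columns of X, since X X^T - I annihilates them. *)
Lemma normal_comp_orth : Q^T *m X = 0.
Proof.
have P_X : (X *m X^T - 1%:M)^T *m X = 0.
  rewrite raddfB /= trmx_mul trmxK trmx1 mulmxBl -mulmxA X_stiefel.
  by rewrite mulmx1 mul1mx subrr.
by rewrite /Q !trmx_mul -!mulmxA P_X !mulmx0.
Qed.

(* The gradient splits orthogonally into Q N and the tangent part
   -X [A, N] / 2. *)
Lemma sqfrob_gradg :
  sqfrob (gradg M X) = sqfrob (Q *m Nmat R r) + sqfrob (commr A (Nmat R r)) / 4.
Proof.
rewrite [gradg M X]/gradg -/A -/Q sqfrobB_orth; last first.
  rewrite -scalemxAr trmx_mul -mulmxA (mulmxA Q^T) normal_comp_orth.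
  by rewrite mul0mx mulmx0 scaler0.
by rewrite sqfrobZ (sqfrob_isometry _ X_stiefel); field.
Qed.

Lemma sqfrob_gradg_ge :
  sqfrob Q + sqfrob (offdiag_part A) / 4 <= sqfrob (gradg M X).
Proof.
rewrite sqfrob_gradg lerD ?ler_pM2r ?invr_gt0 ?ltr0n //.
  exact: sqfrob_le_mulNmat.
exact: sqfrob_offdiag_le_commr.
Qed.

Lemma residual_decomp : X *m diag_part A - M *m X = Q - X *m offdiag_part A.
Proof.
by rewrite diag_part_offdiag mulmxBr /Q /A !mulmxBl mul1mx !mulmxA addrAC.
Qed.

Lemma sqfrob_residual :
  sqfrob (X *m diag_part A - M *m X) = sqfrob Q + sqfrob (offdiag_part A).
Proof.
rewrite residual_decomp sqfrobB_orth ?(sqfrob_isometry _ X_stiefel) //.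
by rewrite mulmxA normal_comp_orth mul0mx.
Qed.

Lemma col_residual j :
  col j (X *m diag_part A - M *m X) = - (M *m col j X - A j j *: col j X).
Proof.
apply/matrixP => i k; rewrite diag_partE mul_mx_diag !mxE.
have -> : \sum_l M i l * col j X l k = \sum_l M i l * X l j.
  by apply: eq_bigr => l _; rewrite !mxE.
ring.
Qed.

End StiefelGradient.

Theorem mainTheorem7 (R : rcfType) (n r : nat) (M : 'M[R]_n) (eps : R)
  (X : 'M[R]_(n, r)) :
  M^T = M -> 0 < eps -> stiefel X -> frob (gradg M X) <= eps ->
  let A := X^T *m M *m X in
  [/\ frob (offdiag_part A) <= 2 * eps,
      frob (X *m X^T *m M *m X - M *m X) <= eps,
      frob (X *m diag_part A - M *m X) <= 3 * eps &
      forall j : 'I_r, exists lam : R,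
        eigenvalue M lam /\
        `| ((col j X)^T *m M *m col j X) 0 0 - lam | <= 3 * eps].
Proof.
move=> M_sym eps_gt0 X_stiefel grad_le A.
have eps_ge0 : 0 <= eps := ltW eps_gt0.
rewrite frob_le // in grad_le.
have key := sqfrob_gradg_ge M X_stiefel; rewrite -/A in key.
have normal_ge0 := sqfrob_ge0 ((X *m X^T - 1%:M) *m M *m X).
have offdiag_ge0 := sqfrob_ge0 (offdiag_part A).
have residual_le : frob (X *m diag_part A - M *m X) <= 3 * eps.
  by rewrite frob_le ?sqfrob_residual //; nra.
split => [||//|j].
- by rewrite frob_le; nra.
- have -> : X *m X^T *m M *m X - M *m X = (X *m X^T - 1%:M) *m M *m X.
    by rewrite !mulmxBl mul1mx.
  by rewrite frob_le //; nra.
have col_unit : ((col j X)^T *m col j X) 0 0 = 1.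
  by rewrite -[(col j X)^T]mulmx1 col_form mulmx1 X_stiefel mxE eqxx.
have [lam [lam_eig lam_le]] := sym_residual_eigenvalue (A j j) M_sym col_unit.
exists lam; split => //; rewrite col_form -/A.
apply: le_trans lam_le _; rewrite -frobN -col_residual.
exact: le_trans (frob_col_le _ j) residual_le.
Qed.
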